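(* Under the Standing Setup and Assumption (G) described in the context, $$\mathcal{E}(PC_{f,\mathcal{T}})\ \ge\ \max_{\alpha\in V_k}\big[\mathcal{E}(f\oplus\varphi_\alpha)\big]^{2^s},$$ where $V_k\subseteq\mathbf{F}_2^n$ is the subspace spanned by the first $k$ standard basis vectors.
   Context: Standing Setup. $f:\mathbf{F}_2^n\to\mathbf{F}_2$ is a Boolean function. $\mathbf{x}_1,\ldots,\mathbf{x}_n$ are binary sequences, $\mathbf{x}_j=(x_j(t))_{t\ge0}$, with $\mathbf{x}_j$ periodic of period $T_j$, i.e. $x_j(t)=x_j(t \bmod T_j)$. Let $s\ge1$ and integers $0=\ell_1<\ell_2<\cdots<\ell_{s+1}=k\le n$; variable $j$ belongs to block $i$ if $\ell_i<j\le\ell_{i+1}$. For $1\le i\le s$, $M_i=q_i\,\mathrm{lcm}(T_{\ell_i+1},\ldots,T_{\ell_{i+1}})$ with $q_i$ a positive integer. For $c=\sum_{i=1}^s c_i2^{i-1}\in\{0,\ldots,2^s-1\}$ with $c_i\in\{0,1\}$, put $\tau_c=\sum_{i=1}^s c_iM_i$, and $\mathcal{T}=\{\tau_c\}$. The parity-check sequence is $PC_{f,\mathcal{T}}(t)=\bigoplus_{c=0}^{2^s-1} f\big(x_1(t+\tau_c),\ldots,x_n(t+\tau_c)\big)$. The bias of a Boolean function $h$ of $m$ variables is $\mathcal{E}(h)=2^{-m}\sum_{x\in\mathbf{F}_2^m}(-1)^{h(x)}$. The bias $\mathcal{E}(PC_{f,\mathcal{T}})$ is the bias of $PC_{f,\mathcal{T}}(t)$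 (for a fixed $t\ge0$) viewed as a Boolean function of the $T_1+\cdots+T_n$ bits $x_j(0),\ldots,x_j(T_j-1)$, $1\le j\le n$; equivalently $\mathbb{E}[(-1)^{PC_{f,\mathcal{T}}(t)}]$ when these bits are independent and uniform. Assumption (G): (i) for every $j$ with $k<j\le n$, the $2^s$ integers $\tau_c$ are pairwise incongruent modulo $T_j$; (ii) for every $i\in\{1,\ldots,s\}$ and every $j$ in block $i$, the $2^{s-1}$ integers $\sum_{l\ne i}c_lM_l$ ($c_l\in\{0,1\}$) are pairwise incongruent modulo $T_j$. For $\alpha\in\mathbf{F}_2^n$, $\varphi_\alpha$ is the linear function $x\mapsto\alpha\cdot x=\bigoplus_{j}\alpha_jx_j$. *)

From HB Require Import structures.
From mathcomp Require Import all_boot all_order all_algebra.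
Set Implicit Arguments. Unset Strict Implicit. Unset Printing Implicit Defensive.
Import Order.TTheory GRing.Theory Num.Theory.

(* F_2^m is modelled as {ffun 'I_m -> bool}; xor is addb. *)

Definition bias (A : finType) (h : A -> bool) : rat :=
  ((#|A|%:R)^-1 * \sum_(x : A) (-1) ^+ h x)%R.

Definition linphi (n : nat) (alpha x : {ffun 'I_n -> bool}) : bool :=
  \big[addb/false]_(j < n) (alpha j && x j).

(* The independent bits x_j(0),...,x_j(T_j - 1), 0 <= j < n (0-indexed) *)
Definition bitvar (n : nat) (T : 'I_n -> nat) : finType :=
  {j : 'I_n & 'I_(T j)}.

Definition seqval (n : nat) (T : 'I_n -> nat) (Tpos : forall j, 0 < T j)
  (X : {ffun bitvar T -> bool}) (j : 'I_n) (t : nat) : bool :=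
  X (Tagged (fun j => 'I_(T j)) (Ordinal (ltn_pmod t (Tpos j)))).

(* Blocks (0-indexed): variable j (0-indexed) belongs to block i < s iff
   l i <= j < l i.+1   (i.e. l_{i+1} < j+1 <= l_{i+2} in 1-indexed terms). *)
Definition inblock (l : nat -> nat) (i j : nat) : bool := (l i <= j < l i.+1)%N.

Definition Mblk (n : nat) (T : 'I_n -> nat) (l q : nat -> nat) (i : nat) : nat :=
  (q i * \big[lcmn/1%N]_(j : 'I_n | inblock l i j) T j)%N.

Definition tau (n s : nat) (T : 'I_n -> nat) (l q : nat -> nat)
  (c : {ffun 'I_s -> bool}) : nat :=
  (\sum_(i < s) c i * Mblk T l q i)%N.

Definition PC (n s : nat) (T : 'I_n -> nat) (Tpos : forall j, 0 < T j)
  (l q : nat -> nat) (f : {ffun 'I_n -> bool} -> bool) (t : nat)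
  (X : {ffun bitvar T -> bool}) : bool :=
  \big[addb/false]_(c : {ffun 'I_s -> bool})
     f [ffun j => seqval Tpos X j (t + tau T l q c)].

(* Write F = (-1)^f and let chi_i be the character of alpha restricted to
   block i, so that (-1)^(f + phi_alpha) = F chi_0 ... chi_(s-1).  For m <= s
   we use an idealised "m-th cube model": independent uniform bits Y(j, d),
   j a variable and d in F_2^s; at a shift c supported on the coordinates
   below m, variable j reads the bit of the cell (j, cell_m j c), where
   cell_m j c forgets the coordinates i < m of c whose block contains j.
   cube_avg m F is the expectation of the product of F over these 2^m shifts.
   - General probability on uniform Boolean assignments (averages, splicing,
     conditional expectations, restriction along an injection) yields a
     conditional Cauchy-Schwarz inequality, which gives
     cube_avg m (F chi_m)^2 <= cube_avg (m+1) F; since cube_avg 0 F = E[F],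
     induction on m gives E[F chi_0 ... chi_(m-1)]^(2^m) <= cube_avg m F.
   - Under Assumption (G) the cells read in the s-th model are sent
     injectively to the bits x_j((t + tau_d) mod T_j), so the parity-check
     bias equals cube_avg s F; the corollary follows with m = s. *)

From HB Require Import structures.
From mathcomp Require Import all_boot all_order all_algebra ring.
Import Order.TTheory GRing.Theory Num.Theory.

Section ParityCheckBias.
Set Implicit Arguments. Unset Strict Implicit.
Local Open Scope ring_scope.

Definition avg (T : finType) (h : T -> rat) : rat := (#|T|%:R)^-1 * \sum_(x : T) h x.

Lemma biasE (A : finType) (h : A -> bool) : bias h = avg (fun x => (-1) ^+ h x).
Proof. by []. Qed.

Lemma eq_avg (T : finType) (h1 h2 : T -> rat) : h1 =1 h2 -> avg h1 = avg h2.
Proof. by move=> E; rewrite /avg; congr (_ * _); apply: eq_bigr => x _. Qed.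

(* Nonnegativity of the variance: (E u)^2 <= E (u^2). *)
Lemma sqr_avg_le (T : finType) (u : T -> rat) :
  avg u ^+ 2 <= avg (fun x => u x ^+ 2).
Proof.
have [T0 | T_gt0] := posnP #|T|; first by rewrite /avg T0 invr0 !mul0r expr0n.
set N := (#|T|%:R : rat); set a := avg u.
have N_gt0 : 0 < N by rewrite ltr0n.
have sum_u : \sum_x u x = N * a by rewrite /a /avg mulrA mulfV ?mul1r ?gt_eqF.
have var_ge0 : 0 <= \sum_x (u x - a) ^+ 2 := sumr_ge0 _ (fun _ _ => sqr_ge0 _).
have var_eq : \sum_x (u x - a) ^+ 2 = \sum_x u x ^+ 2 - N * a ^+ 2.
  rewrite (eq_bigr (fun x => u x ^+ 2 - a *+ 2 * u x + a ^+ 2)); last first.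
    by move=> x _; rewrite sqrrB; ring.
  rewrite !big_split sumrN /= -mulr_sumr sum_u sumr_const -mulr_natr -/N; ring.
by rewrite /avg -/N ler_pdivlMl // -subr_ge0 -var_eq.
Qed.

Definition splice (A : finType) (P : pred A) (Y1 Y2 : {ffun A -> bool}) :
  {ffun A -> bool} := [ffun a => if P a then Y1 a else Y2 a].

Lemma card_ffun_neq0 (A : finType) : (#|{ffun A -> bool}|%:R : rat) != 0.
Proof. by rewrite pnatr_eq0 -lt0n; apply/card_gt0P; exists [ffun=> false]. Qed.

(* Splicing two independent uniform assignments gives a uniform assignment,
   since (Y1, Y2) |-> (splice P Y1 Y2, splice P Y2 Y1) is an involution. *)
Lemma sum_splice (A : finType) (P : pred A) (G : {ffun A -> bool} -> rat) :
  \sum_(Y1 : {ffun A -> bool}) \sum_(Y2 : {ffun A -> bool}) G (splice P Y1 Y2)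
  = #|{ffun A -> bool}|%:R * \sum_Y G Y.
Proof.
pose swap (p : {ffun A -> bool} * {ffun A -> bool}) :=
  (splice P p.1 p.2, splice P p.2 p.1).
have swapK : involutive swap.
  by case=> Y1 Y2; congr pair; apply/ffunP=> a; rewrite !ffunE; case: (P a).
rewrite pair_bigA /= (reindex_inj (inv_inj swapK)) /=.
rewrite (eq_bigr (fun p => G p.1)); last first.
  by case=> Y1 Y2 _; congr G; apply/ffunP=> a; rewrite !ffunE; case: (P a).
rewrite -(pair_bigA _ (fun Y1 Y2 => G Y1)) /= mulr_sumr.
by apply: eq_bigr => Y _; rewrite sumr_const mulr_natl.
Qed.

Definition condexp (A : finType) (W : pred A) (h : {ffun A -> bool} -> rat)
  (Y : {ffun A -> bool}) : rat := avg (fun Y2 => h (splice W Y Y2)).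

Section ConditionalExpectation.
Variables (A : finType) (W : pred A).
Local Notation assign := {ffun A -> bool}.

Lemma condexp_splice (h : assign -> rat) (Y1 Y2 : assign) :
  condexp W h (splice W Y1 Y2) = condexp W h Y1.
Proof.
by apply: eq_avg => Y3; congr h; apply/ffunP => a; rewrite !ffunE; case: (W a).
Qed.

Lemma sum_condexp_mul (h chi : assign -> rat) :
  (forall Y1 Y2, chi (splice W Y1 Y2) = chi Y1) ->
  \sum_Y h Y * chi Y = \sum_Y condexp W h Y * chi Y.
Proof.
move=> chiW; rewrite -[LHS]mul1r -(mulVf (card_ffun_neq0 A)) -mulrA.
rewrite -(sum_splice W (fun Y => h Y * chi Y)) mulr_sumr.
apply: eq_bigr => Y1 _; rewrite /condexp /avg -mulrA mulr_suml.
by congr (_ * _); apply: eq_bigr => Y2 _; rewrite chiW.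
Qed.

(* Let h depend only on the coordinates in U, and let the involution p fix W
   pointwise, with U /\ p(U) = W.  Then h and h o p are conditionally
   independent given W, with the same conditional law:
   E[h (h o p)] = E[h E[h | W]]. *)
Lemma sum_pair_condexp (U : pred A) (p : A -> A) (h : assign -> rat) :
  involutive p -> (forall a, W a -> p a = a) -> (forall a, W a -> U a) ->
  (forall a, U a -> U (p a) -> W a) ->
  (forall Y Y' : assign, (forall a, U a -> Y a = Y' a) -> h Y = h Y') ->
  \sum_Y h Y * h [ffun a => Y (p a)] = \sum_Y h Y * condexp W h Y.
Proof.
move=> pK pW WU UW hU.
pose perm (Y : assign) : assign := [ffun a => Y (p a)].
have permK : involutive perm by move=> Y; apply/ffunP=> a; rewrite !ffunE pK.
rewrite -[LHS]mul1r -(mulVf (card_ffun_neq0 A)) -mulrA.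
rewrite -(sum_splice U (fun Y => h Y * h (perm Y))) mulr_sumr.
apply: eq_bigr => Y1 _; rewrite /condexp /avg [RHS]mulrCA.
congr (_ * _); rewrite mulr_sumr (reindex_inj (inv_inj permK)); apply: eq_bigr => Y2 _.
congr (_ * _); first by apply: hU => a Ua; rewrite ffunE Ua.
apply: hU => a Ua; rewrite !ffunE.
case Wa: (W a); first by rewrite (pW a Wa) Ua.
case Upa: (U (p a)); last by rewrite pK.
by rewrite (UW a Ua Upa) in Wa.
Qed.

(* Conditional Cauchy-Schwarz: if moreover chi = +-1 only depends on the
   coordinates in W, then E[h chi]^2 <= E[E[h | W]^2] = E[h (h o p)]. *)
Lemma sqr_avg_le_pair (U : pred A) (p : A -> A) (h chi : assign -> rat) :
  involutive p -> (forall a, W a -> p a = a) -> (forall a, W a -> U a) ->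
  (forall a, U a -> U (p a) -> W a) ->
  (forall Y Y' : assign, (forall a, U a -> Y a = Y' a) -> h Y = h Y') ->
  (forall Y Y' : assign, (forall a, W a -> Y a = Y' a) -> chi Y = chi Y') ->
  (forall Y, chi Y ^+ 2 = 1) ->
  avg (fun Y => h Y * chi Y) ^+ 2 <= avg (fun Y => h Y * h [ffun a => Y (p a)]).
Proof.
move=> pK pW WU UW hU chiW chi_sign; set g := condexp W h.
have chi_splice Y1 Y2 : chi (splice W Y1 Y2) = chi Y1.
  by apply: chiW => a Wa; rewrite ffunE Wa.
have -> : avg (fun Y => h Y * chi Y) = avg (fun Y => g Y * chi Y).
  by rewrite /avg (sum_condexp_mul h chi_splice).
have -> : avg (fun Y => h Y * h [ffun a => Y (p a)]) =
          avg (fun Y => (g Y * chi Y) ^+ 2).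
  rewrite /avg (sum_pair_condexp pK pW WU UW hU) (sum_condexp_mul h (condexp_splice h)).
  by congr (_ * _); apply: eq_bigr => Y _; rewrite exprMn chi_sign mulr1.
exact: sqr_avg_le.
Qed.

End ConditionalExpectation.

Section Restriction.
Variables (A B : finType) (io : B -> A).
Hypothesis io_inj : injective io.
Local Notation restrict Y := ([ffun b => Y (io b)] : {ffun B -> bool}).

(* All fibres of the restriction map Y |-> Y o io have the same size: xoring
   with an extension of z maps the fibre of 0 onto the fibre of z. *)
Lemma fibre_restrict_const (z : {ffun B -> bool}) :
  \sum_(Y : {ffun A -> bool}) ((restrict Y == z)%:R : rat) =
  \sum_(Y : {ffun A -> bool}) ((restrict Y == [ffun=> false])%:R : rat).
Proof.
pose ext a := [exists b, (io b == a) && z b].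
have ext_io b : ext (io b) = z b.
  apply/existsP/idP => [[b' /andP[/eqP/io_inj -> //]] | zb].
  by exists b; rewrite eqxx.
pose translate (Y : {ffun A -> bool}) : {ffun A -> bool} := [ffun a => Y a (+) ext a].
have translateK : involutive translate.
  by move=> Y; apply/ffunP=> a; rewrite !ffunE -addbA addbb addbF.
rewrite (reindex_inj (inv_inj translateK)); apply: eq_bigr => Y _.
congr ((nat_of_bool _)%:R); apply/idP/idP => /eqP/ffunP E; apply/eqP/ffunP => b;
  move: (E b); rewrite !ffunE ext_io; by case: (Y (io b)); case: (z b).
Qed.

Lemma avg_restrict (G : {ffun B -> bool} -> rat) :
  avg (fun Y : {ffun A -> bool} => G (restrict Y)) = avg G.
Proof.
set K := \sum_(Y : {ffun A -> bool}) ((restrict Y == [ffun=> false])%:R : rat).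
have sum_restrict (H : {ffun B -> bool} -> rat) :
    \sum_(Y : {ffun A -> bool}) H (restrict Y) = K * \sum_z H z.
  transitivity (\sum_(Y : {ffun A -> bool}) \sum_(z : {ffun B -> bool})
                  ((restrict Y == z)%:R * H z)).
    apply: eq_bigr => Y _; rewrite (bigD1 (restrict Y)) //= eqxx mul1r big1 ?addr0 //.
    by move=> z /negbTE; rewrite eq_sym => ->; rewrite mul0r.
  rewrite exchange_big mulr_sumr; apply: eq_bigr => z _.
  by rewrite -mulr_suml fibre_restrict_const.
have cardA : (#|{ffun A -> bool}|%:R : rat) = K * #|{ffun B -> bool}|%:R.
  by rewrite -!sumr_const (sum_restrict (fun _ => 1)).
have K_neq0 : K != 0.
  by apply: contraTneq (card_ffun_neq0 A) => K0; rewrite cardA K0 mul0r.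
by rewrite /avg sum_restrict cardA invfM -mulrA [_^-1 * (K * _)]mulrCA mulKf.
Qed.
End Restriction.

Section CubeModel.
Variables (n s : nat) (R : 'I_s -> 'I_n -> bool).
Local Notation vec := {ffun 'I_n -> bool}.
Local Notation shift := {ffun 'I_s -> bool}.
Local Notation cells := {ffun 'I_n * shift -> bool}.

(* In the m-th model, variable j read at shift c looks up the cell
   (j, cell m j c): the coordinates i < m of c whose block R i contains j are
   forgotten, so shifts differing only there share the bit. *)
Definition cell (m : nat) (j : 'I_n) (c : shift) : shift :=
  [ffun i => c i && ~~ ((i < m)%N && R i j)].

Definition view (m : nat) (Y : cells) (c : shift) : vec := [ffun j => Y (j, cell m j c)].

Definition low (m : nat) (c : shift) : bool := [forall i : 'I_s, (m <= i)%N ==> ~~ c i].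

Definition cube_prod (m : nat) (F : vec -> rat) (Y : cells) : rat :=
  \prod_(c | low m c) F (view m Y c).

Definition cube_avg (m : nat) (F : vec -> rat) : rat := avg (cube_prod m F).

Definition block_sign (i : 'I_s) (al x : vec) : rat :=
  \prod_(j | R i j) (-1) ^+ (al j && x j).

Definition prefix_sign (m : nat) (al x : vec) : rat :=
  \prod_(i : 'I_s | (i < m)%N) block_sign i al x.

Lemma prefix_sign_full (al x : vec) : prefix_sign s al x = \prod_i block_sign i al x.
Proof. by apply: eq_bigl => i; rewrite ltn_ord. Qed.

(* The 0-th model reads a single uniform vector. *)
Lemma cube_avg0 (F : vec -> rat) : cube_avg 0 F = avg F.
Proof.
have zero_inj : injective (fun j : 'I_n => (j, [ffun=> false] : shift)) by move=> j j' [].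
rewrite -(avg_restrict zero_inj F).
apply: eq_avg => Y; rewrite /cube_prod (big_pred1 ([ffun=> false] : shift)); last first.
  move=> c; apply/forallP/eqP => [c_low | ->]; last by move=> i; rewrite ffunE.
  by apply/ffunP => i; rewrite ffunE; apply/negbTE; exact: (implyP (c_low i)).
congr F; apply/ffunP => j; rewrite !ffunE; congr (Y (_, _)).
by apply/ffunP => i; rewrite !ffunE.
Qed.

Section Step.
Variable i0 : 'I_s.

Definition flip (c : shift) : shift := [ffun i => if i == i0 then ~~ c i else c i].

(* If (j, d) is the cell read at a shift c with c i0 = false in model i0,
   partner (j, d) is the cell read at flip c in model i0+1 (cell_succ_flip):
   the same cell if j lies in block i0, the flipped one otherwise. *)
Definition partner (a : 'I_n * shift) : 'I_n * shift :=
  if R i0 a.1 then a else (a.1, flip a.2).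

Lemma flipK : involutive flip.
Proof.
by move=> c; apply/ffunP => i; rewrite !ffunE; case: eqP => // _; rewrite negbK.
Qed.

Lemma low_i0 (c : shift) : low i0 c -> c i0 = false.
Proof. by move=> /forallP /(_ i0) /implyP /(_ (leqnn _)) /negbTE. Qed.

Lemma low_succ (c : shift) : low i0.+1 c && ~~ c i0 = low i0 c.
Proof.
apply/idP/idP => [/andP[/forallP c_low c_i0] | /forallP c_low].
  apply/forallP => i; apply/implyP; rewrite leq_eqVlt => /orP[/eqP/val_inj <- //|].
  exact: (implyP (c_low i)).
apply/andP; split; last exact: (implyP (c_low i0) (leqnn _)).
by apply/forallP => i; apply/implyP => lt; apply: (implyP (c_low i)); exact: ltnW.
Qed.

Lemma low_succ_flip (c : shift) : low i0.+1 (flip c) && flip c i0 = low i0 c.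
Proof.
rewrite -low_succ ffunE eqxx; congr andb; apply: eq_forallb => i.
by rewrite ffunE; case: eqP => // ->; rewrite ltnn.
Qed.

Lemma cell_succ (c : shift) j : c i0 = false -> cell i0.+1 j c = cell i0 j c.
Proof.
move=> c_i0; apply/ffunP => i; rewrite !ffunE.
have [->|ne] := eqVneq i i0; first by rewrite c_i0.
have ne' : (nat_of_ord i == i0) = false by exact: negbTE ne.
by rewrite ltnS leq_eqVlt ne'.
Qed.

Lemma cell_succ_flip (c : shift) j : c i0 = false ->
  cell i0.+1 j (flip c) = if R i0 j then cell i0 j c else flip (cell i0 j c).
Proof.
move=> c_i0; apply/ffunP => i; have [->|ne] := eqVneq i i0.
  by case Rj: (R i0 j); rewrite !ffunE eqxx c_i0 Rj ?ltnSn ?ltnn.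
have ne' : (nat_of_ord i == i0) = false by exact: negbTE ne.
by case Rj: (R i0 j); rewrite !ffunE (negbTE ne) ltnS leq_eqVlt ne'.
Qed.

(* Splitting the shifts of model i0+1 according to c i0: the flipped shifts
   read the partner cells. *)
Lemma cube_prod_succ (F : vec -> rat) (Y : cells) :
  cube_prod i0.+1 F Y = cube_prod i0 F Y * cube_prod i0 F [ffun a => Y (partner a)].
Proof.
rewrite /cube_prod (bigID (fun c : shift => c i0)) /= mulrC; congr (_ * _).
  under eq_bigl do rewrite low_succ.
  apply: eq_bigr => c c_low; congr F; apply/ffunP => j.
  by rewrite !ffunE cell_succ ?low_i0.
rewrite (reindex_inj (inv_inj flipK)); under eq_bigl do rewrite low_succ_flip.
apply: eq_bigr => c c_low; congr F; apply/ffunP => j.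
by rewrite !ffunE cell_succ_flip ?low_i0 // /partner /=; case: (R i0 j).
Qed.

(* One conditional Cauchy-Schwarz step, conditioning on the cells of the
   variables of block i0, on which the block character depends. *)
Lemma cube_step (F : vec -> rat) (al : vec) :
  cube_avg i0 (fun x => F x * block_sign i0 al x) ^+ 2 <= cube_avg i0.+1 F.
Proof.
pose ch (Y : cells) := \prod_(c | low i0 c) block_sign i0 al (view i0 Y c).
have -> : cube_avg i0 (fun x => F x * block_sign i0 al x) =
          avg (fun Y => cube_prod i0 F Y * ch Y).
  by apply: eq_avg => Y; rewrite /cube_prod -big_split.
rewrite /cube_avg (eq_avg (cube_prod_succ F)).
apply: (@sqr_avg_le_pair _ (fun a : 'I_n * shift => R i0 a.1)
  (fun a : 'I_n * shift => R i0 a.1 || ~~ a.2 i0) partner).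
- by case=> j d; rewrite /partner /=; case Rj: (R i0 j); rewrite /= ?Rj ?flipK.
- by case=> j d /= Rj; rewrite /partner /= Rj.
- by move=> a /= ->.
- case=> j d /=; rewrite /partner /=; case Rj: (R i0 j) => //=.
  by rewrite Rj ffunE eqxx negbK; case: (d i0).
- move=> Y Y' agree; apply: eq_bigr => c c_low; congr F; apply/ffunP => j.
  by rewrite !ffunE agree //= ffunE low_i0 // orbT.
- move=> Y Y' agree; apply: eq_bigr => c _; apply: eq_bigr => j Rj.
  by rewrite !ffunE agree.
- move=> Y; rewrite -prodrXl big1 // => c _.
  by rewrite -prodrXl big1 // => j _; exact: sqrr_sign.
Qed.

End Step.

Lemma cube_avg_lower_bound (al : vec) (m : nat) (F : vec -> rat) : (m <= s)%N ->
  avg (fun x => F x * prefix_sign m al x) ^+ (2 ^ m) <= cube_avg m F.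
Proof.
have prefix_sign0 x : prefix_sign 0 al x = 1 by rewrite /prefix_sign big1.
have base G : avg (fun x => G x * prefix_sign 0 al x) = cube_avg 0 G.
  by rewrite cube_avg0; apply: eq_avg => x; rewrite prefix_sign0 mulr1.
elim: m F => [|m IH] F m_lt; first by rewrite base.
pose i : 'I_s := Ordinal m_lt.
set G := fun x => F x * block_sign i al x.
have split_sign x : F x * prefix_sign m.+1 al x = G x * prefix_sign m al x.
  rewrite /G -mulrA /prefix_sign (bigD1 i) //=; congr (_ * (_ * _)).
  apply: eq_bigl => i'; rewrite ltnS leq_eqVlt andbC.
  have [->|ne] := eqVneq i' i; first by rewrite eqxx /= ltnn.
  have ne' : (nat_of_ord i' == m) = false by exact: negbTE ne.
  by rewrite ne'.
rewrite (eq_avg split_sign) expnS mulnC exprM; apply: le_trans (cube_step i F al).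
have IHG := IH G (ltnW m_lt); have [m0 | m_gt0] := posnP m.
  by subst m; rewrite expn0 expr1 base.
have even_ge0 : 0 <= avg (fun x => G x * prefix_sign m al x) ^+ (2 ^ m).
  by rewrite -(prednK m_gt0) expnS mulnC exprM sqr_ge0.
by rewrite !expr2 ler_pM.
Qed.

End CubeModel.

Lemma sign_xor (I : finType) (b : I -> bool) :
  (-1) ^+ (\big[addb/false]_(i : I) b i) = \prod_(i : I) ((-1) ^+ b i : rat).
Proof. by elim/big_rec2: _ => // i x r _ <-; exact: signr_addb. Qed.

Section Blocks.
Variables (s : nat) (l : nat -> nat).
Hypothesis l0 : l 0 = 0%N.
Hypothesis l_incr : forall i, (i < s)%N -> (l i < l i.+1)%N.

Lemma inblock_uniq (i i' : 'I_s) (j : nat) : inblock l i j -> inblock l i' j -> i = i'.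
Proof.
have l_mono : {in [pred a | (a <= s)%N] &, {homo l : a b / (a <= b)%N}}.
  apply: homo_leq_in => [//|a b c|a b /= _ bs c /andP[_ cb]|a /= _ as1].
  - exact: leq_trans.
  - exact: leq_trans (ltnW cb) bs.
  - exact: ltnW (l_incr as1).
suff le_blocks (i1 i2 : 'I_s) : inblock l i1 j -> inblock l i2 j -> (i1 <= i2)%N.
  by move=> h h'; apply/val_inj/eqP; rewrite eqn_leq !le_blocks.
move=> /andP[j_ge _] /andP[_ j_lt]; rewrite leqNgt; apply/negP => lt21.
have := leq_trans (l_mono _ _ (ltn_ord i2) (ltnW (ltn_ord i1)) lt21) j_ge.
by rewrite leqNgt j_lt.
Qed.

Lemma inblock_exists (j : nat) : (j < l s)%N -> exists i : 'I_s, inblock l i j.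
Proof.
suff blocks m : (m <= s)%N -> (j < l m)%N -> exists i : 'I_s, inblock l i j.
  exact: blocks.
elim: m => [|m IHm] m_le j_lt; first by rewrite l0 in j_lt.
have [j_lo | j_hi] := ltnP j (l m); first exact: IHm (ltnW m_le) j_lo.
by exists (Ordinal m_le); rewrite /inblock /= j_hi j_lt.
Qed.

End Blocks.

Section Link.
Variables (n s : nat) (l : nat -> nat).
Hypothesis l0 : l 0 = 0%N.
Hypothesis l_incr : forall i, (i < s)%N -> (l i < l i.+1)%N.
Local Notation R := (fun (i : 'I_s) (j : 'I_n) => inblock l i j).
Local Notation vec := {ffun 'I_n -> bool}.
Local Notation shift := {ffun 'I_s -> bool}.

(* For alpha supported on the first l_s variables, phi_alpha splits as a sum
   over the blocks, so (-1)^(f + phi_alpha) = (-1)^f * prod_i chi_i. *)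
Lemma bias_twist (f : vec -> bool) (al : vec) :
  (forall j : 'I_n, (l s <= j)%N -> al j = false) ->
  bias (fun x => f x (+) linphi al x) = avg (fun x => (-1) ^+ f x * prefix_sign R s al x).
Proof.
move=> al_low; apply: eq_avg => x; rewrite signr_addb sign_xor; congr (_ * _).
rewrite prefix_sign_full /block_sign; symmetry.
under eq_bigr do rewrite big_mkcond; rewrite exchange_big /=.
apply: eq_bigr => j _; case ax: (al j && x j); last by rewrite big1 // => i _; case: ifP.
have j_lo : (j < l s)%N by rewrite ltnNge; apply/negP => /al_low aj; rewrite aj in ax.
have [i Rij] := inblock_exists l0 j_lo.
rewrite (bigD1 i) //= Rij big1 ?mulr1 // => i' ne; case: ifP => // Ri'.
by rewrite (inblock_uniq l_incr Ri' Rij) eqxx in ne.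
Qed.

Variables (T : 'I_n -> nat) (Tpos : forall j, (0 < T j)%N) (q : nat -> nat) (t : nat).

(* T_j divides M_i for j in block i, and forgetting coordinates of other
   blocks does nothing, so tau_c and tau of the cell of c agree mod T_j. *)
Lemma tau_cell (j : 'I_n) (c : shift) :
  (tau T l q c = tau T l q (cell R s j c) %[mod T j])%N.
Proof.
case: (pickP (R^~ j)) => [i Rij | no_block]; last first.
  congr (tau _ _ _ _ %% _)%N; apply/ffunP => i.
  by rewrite ffunE (no_block i) andbF andbT.
rewrite /tau (bigD1 i) //= [in RHS](bigD1 i) //= ffunE ltn_ord Rij andbF mul0n add0n.
rewrite [in RHS](eq_bigr (fun i' => c i' * Mblk T l q i')%N); last first.
  move=> i' ne; rewrite ffunE ltn_ord /=; case Ri': (inblock l i' j); last by rewrite andbT.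
  by rewrite (inblock_uniq l_incr Ri' Rij) eqxx in ne.
have /dvdnP[m ->] : (T j %| Mblk T l q i)%N by apply/dvdn_mull/(biglcmn_sup j).
by rewrite mulnA modnMDl.
Qed.

(* The cells (j, d) read in the s-th model are those fixed by cell s j. *)
Definition canonical (a : 'I_n * shift) : bool := cell R s a.1 a.2 == a.2.

Lemma cell_canonical (j : 'I_n) (c : shift) : canonical (j, cell R s j c).
Proof. by apply/eqP/ffunP => i; rewrite !ffunE -andbA andbb. Qed.

Local Notation cellT := {a : 'I_n * shift | canonical a}.

Definition cell_bit (a : cellT) : bitvar T :=
  Tagged (fun j => 'I_(T j))
    (Ordinal (ltn_pmod (t + tau T l q (val a).2) (Tpos (val a).1))).

Hypothesis G1 : forall j : 'I_n, (l s <= j)%N ->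
  forall c c' : shift, (tau T l q c = tau T l q c' %[mod T j])%N -> c = c'.
Hypothesis G2 : forall (i : 'I_s) (j : 'I_n), inblock l i j ->
  forall c c' : shift, c i = false -> c' i = false ->
  (tau T l q c = tau T l q c' %[mod T j])%N -> c = c'.

Lemma cell_bit_inj : injective cell_bit.
Proof.
move=> [[j d1] can1] [[j2 d2] can2] E; have Ej : j = j2 := congr1 tag E; subst j2.
move/eqP: E; rewrite eq_Tagged /= => /eqP /(congr1 val) /= mod_eq.
have tau_eq : (tau T l q d1 = tau T l q d2 %[mod T j])%N.
  by apply/eqP; rewrite -(eqn_modDl t); apply/eqP.
apply: val_inj => /=; congr pair.
have [j_hi | j_lo] := leqP (l s) j; first exact: G1 j_hi _ _ tau_eq.
have [i Rij] := inblock_exists l0 j_lo.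
have canonical_i d : canonical (j, d) -> d i = false.
  by move=> /eqP /ffunP /(_ i); rewrite ffunE ltn_ord Rij andbF => <-.
exact: G2 Rij _ _ (canonical_i _ can1) (canonical_i _ can2) tau_eq.
Qed.

Lemma bias_PC_cube (f : vec -> bool) :
  bias (@PC n s T Tpos l q f t) = cube_avg R s (fun x => (-1) ^+ f x).
Proof.
pose G (Y : {ffun cellT -> bool}) : rat :=
  \prod_(c : shift)
    (-1) ^+ f [ffun j => Y (exist _ (j, cell R s j c) (cell_canonical j c))].
have low_s (c : shift) : low s c by apply/forallP => i; rewrite leqNgt ltn_ord.
have -> : cube_avg R s (fun x => (-1) ^+ f x) = avg G.
  rewrite /cube_avg -(avg_restrict val_inj G); apply: eq_avg => Y.
  rewrite /cube_prod; under eq_bigl do rewrite low_s.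
  by apply: eq_bigr => c _; congr (_ ^+ f _); apply/ffunP => j; rewrite !ffunE.
rewrite biasE -(avg_restrict cell_bit_inj G); apply: eq_avg => X.
rewrite /PC sign_xor; apply: eq_bigr => c _; congr (_ ^+ f _); apply/ffunP => j.
rewrite !ffunE /seqval /=; congr (X (Tagged _ _)); apply: val_inj => /=.
by rewrite -modnDmr tau_cell modnDmr.
Qed.

End Link.

End ParityCheckBias.

Theorem corollary1 (n s k : nat) (f : {ffun 'I_n -> bool} -> bool)
  (T : 'I_n -> nat) (Tpos : forall j, (0 < T j)%N)
  (l q : nat -> nat)
  (hs : (1 <= s)%N)
  (hl0 : l 0%N = 0%N)
  (hlinc : forall i, (i < s)%N -> (l i < l i.+1)%N)
  (hls : l s = k) (hkn : (k <= n)%N)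
  (hq : forall i, (i < s)%N -> (0 < q i)%N)
  (G1 : forall j : 'I_n, (k <= j)%N ->
          forall c c' : {ffun 'I_s -> bool},
            tau T l q c = tau T l q c' %[mod T j] -> c = c')
  (G2 : forall (i : 'I_s) (j : 'I_n), inblock l i j ->
          forall c c' : {ffun 'I_s -> bool}, c i = false -> c' i = false ->
            tau T l q c = tau T l q c' %[mod T j] -> c = c')
  (t : nat) :
  forall alpha : {ffun 'I_n -> bool}, (forall j : 'I_n, (k <= j)%N -> alpha j = false) ->
    (bias (fun x : {ffun 'I_n -> bool} => f x (+) linphi alpha x) ^+ (2 ^ s)
       <= bias (@PC n s T Tpos l q f t))%R.
Proof.
move=> alpha alpha_low; subst k.
rewrite (bias_twist hl0 hlinc f alpha_low) (bias_PC_cube hl0 hlinc Tpos t G1 G2).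
exact: cube_avg_lower_bound.
Qed.
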